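(* Let $\Gamma\cup\{A\}\subseteq\mathcal{L}_\infty$ and let $t$ be the translation described in the context. (i) If $\Gamma^t\vdash_{\mathbf{K4}(Q)}A^t$, then $\Gamma\vdash_{\mathbf{K4}_h}A$. (ii) If $\Gamma^t\vdash_{\mathbf{S4}(Q)}A^t$, then $\Gamma\vdash_{\mathbf{S4}_h}A$.
   Context: The language $\mathcal{L}_\infty$ consists of modal formulas built from propositional atoms, $\bot,\top$, the connectives $\neg,\wedge,\vee,\rightarrow$ and unary modalities $\Box_n$ ($n\in\mathbb{N}$), with the restriction that $\Box_n A$ is a formula only if $n$ is strictly greater than the index of every box occurring in $A$. Axiom instances are only those that are $\mathcal{L}_\infty$-formulas. Axiom schemes (for all $n\ge0$): $\mathbf{H}$: $\Box_n A\rightarrow\Box_{n+1}A$; $\mathbf{K}_h$: $\Box_n(A\rightarrow B)\rightarrow(\Box_nA\rightarrow\Box_nB)$; $\mathbf{4}_h$: $\Box_nA\rightarrow\Box_{n+1}\Box_nA$; $\mathbf{T}_h$: $\Box_nA\rightarrow A$. For a set $X$ of schemes, $L(X)$ is the least set of $\mathcal{L}_\infty$-formulas containing all classical propositional tautologies and all instances of the schemes in $X$, closed under modus ponens and the rule: from $A$ infer $\Box_nA$ for any $n$ greater than all box indices in $A$. $\mathbf{K4}_h=L(\mathbf{H},\mathbf{K}_h,\mathbf{4}_h)$, $\mathbf{S4}_h=L(\mathbf{H},\mathbf{K}_h,\mathbf{4}_h,\mathbf{T}_h)$. For a set $\Gamma$, $\Gamma\vdash_LA$ means $\bigwedge\Delta\rightarrow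 A\in L$ for some finite $\Delta\subseteq\Gamma$ (analogously for the ordinary logics below). Let $Q=\{q_n\}_{n\ge0}$ be new propositional atoms not occurring in $\mathcal{L}_\infty$-formulas, and let $\mathcal{L}_\Box(Q)$ be the ordinary unimodal language (single modality $\Box$) over the atoms together with $Q$; $\mathbf{K4}(Q)$ and $\mathbf{S4}(Q)$ are the usual modal logics $\mathbf{K4}$ and $\mathbf{S4}$ in this language. The translation $t:\mathcal{L}_\infty\to\mathcal{L}_\Box(Q)$: $p^t=p$ for atoms, $t$ commutes with $\neg,\wedge,\vee,\rightarrow$, and $(\Box_nA)^t=\Box(\bigwedge_{i=0}^n q_i\rightarrow A^t)$. $\Gamma^t=\{B^t:B\in\Gamma\}$. *)

From Stdlib Require Import List Arith.
Import ListNotations.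

Inductive hform : Type :=
| HAtom : nat -> hform
| HBot : hform
| HTop : hform
| HNeg : hform -> hform
| HAnd : hform -> hform -> hform
| HOr : hform -> hform -> hform
| HImp : hform -> hform -> hform
| HBox : nat -> hform -> hform.

Fixpoint boxes_below (n : nat) (A : hform) : Prop :=
  match A with
  | HAtom _ | HBot | HTop => True
  | HNeg B => boxes_below n B
  | HAnd B C | HOr B C | HImp B C => boxes_below n B /\ boxes_below n C
  | HBox m B => m < n /\ boxes_below n B
  end.

(* wf A : A is an L_infty-formula *)
Fixpoint wf (A : hform) : Prop :=
  match A with
  | HAtom _ | HBot | HTop => True
  | HNeg B => wf B
  | HAnd B C | HOr B C | HImp B C => wf B /\ wf C
  | HBox n B => wf B /\ boxes_below n B
  end.

(* classical propositional tautologies: true under every valuation of the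
   atoms and of the boxed subformulas (treated as propositional atoms) *)
Fixpoint heval (v : hform -> bool) (A : hform) : bool :=
  match A with
  | HAtom _ => v A
  | HBot => false
  | HTop => true
  | HNeg B => negb (heval v B)
  | HAnd B C => heval v B && heval v C
  | HOr B C => heval v B || heval v C
  | HImp B C => implb (heval v B) (heval v C)
  | HBox _ _ => v A
  end.

Definition htaut (A : hform) : Prop := forall v, heval v A = true.

Inductive axH : hform -> Prop :=
  axH_i : forall n A, axH (HImp (HBox n A) (HBox (S n) A)).
Inductive axK : hform -> Prop :=
  axK_i : forall n A B,
    axK (HImp (HBox n (HImp A B)) (HImp (HBox n A) (HBox n B))).
Inductive ax4 : hform -> Prop :=
  ax4_i : forall n A, ax4 (HImp (HBox n A) (HBox (S n) (HBox n A))).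
Inductive axT : hform -> Prop :=
  axT_i : forall n A, axT (HImp (HBox n A) A).

(* L(X): X is given as a predicate selecting the admitted axiom instances *)
Inductive Lh (X : hform -> Prop) : hform -> Prop :=
| Lh_taut : forall A, wf A -> htaut A -> Lh X A
| Lh_ax : forall A, wf A -> X A -> Lh X A
| Lh_mp : forall A B, Lh X A -> Lh X (HImp A B) -> Lh X B
| Lh_nec : forall n A, Lh X A -> boxes_below n A -> Lh X (HBox n A).

Definition K4h_axioms (A : hform) : Prop := axH A \/ axK A \/ ax4 A.
Definition S4h_axioms (A : hform) : Prop := axH A \/ axK A \/ ax4 A \/ axT A.

Definition K4h : hform -> Prop := Lh K4h_axioms.
Definition S4h : hform -> Prop := Lh S4h_axioms.

Fixpoint hbigand (l : list hform) : hform :=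
  match l with
  | [] => HTop
  | B :: l' => HAnd B (hbigand l')
  end.

Definition hderives (L : hform -> Prop) (Gamma : hform -> Prop) (A : hform) : Prop :=
  exists Delta : list hform,
    (forall B, In B Delta -> Gamma B) /\ L (HImp (hbigand Delta) A).

(* atoms: the original atoms P p, and the new atoms Q n (= q_n) *)
Inductive uatom : Type := PA : nat -> uatom | QA : nat -> uatom.

Inductive mform : Type :=
| MAtom : uatom -> mform
| MBot : mform
| MTop : mform
| MNeg : mform -> mform
| MAnd : mform -> mform -> mform
| MOr : mform -> mform -> mform
| MImp : mform -> mform -> mform
| MBox : mform -> mform.

Fixpoint meval (v : mform -> bool) (A : mform) : bool :=
  match A with
  | MAtom _ => v A
  | MBot => false
  | MTop => true
  | MNeg B => negb (meval v B)
  | MAnd B C => meval v B && meval v C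
  | MOr B C => meval v B || meval v C
  | MImp B C => implb (meval v B) (meval v C)
  | MBox _ => v A
  end.

Definition mtaut (A : mform) : Prop := forall v, meval v A = true.

Inductive maxK : mform -> Prop :=
  maxK_i : forall A B, maxK (MImp (MBox (MImp A B)) (MImp (MBox A) (MBox B))).
Inductive max4 : mform -> Prop :=
  max4_i : forall A, max4 (MImp (MBox A) (MBox (MBox A))).
Inductive maxT : mform -> Prop :=
  maxT_i : forall A, maxT (MImp (MBox A) A).

Inductive Lm (X : mform -> Prop) : mform -> Prop :=
| Lm_taut : forall A, mtaut A -> Lm X A
| Lm_ax : forall A, X A -> Lm X A
| Lm_mp : forall A B, Lm X A -> Lm X (MImp A B) -> Lm X B
| Lm_nec : forall A, Lm X A -> Lm X (MBox A).

Definition K4Q : mform -> Prop := Lm (fun A => maxK A \/ max4 A).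
Definition S4Q : mform -> Prop := Lm (fun A => maxK A \/ max4 A \/ maxT A).

Fixpoint mbigand (l : list mform) : mform :=
  match l with
  | [] => MTop
  | B :: l' => MAnd B (mbigand l')
  end.

Definition mderives (L : mform -> Prop) (Gamma : mform -> Prop) (A : mform) : Prop :=
  exists Delta : list mform,
    (forall B, In B Delta -> Gamma B) /\ L (MImp (mbigand Delta) A).

Fixpoint qconj (n : nat) : mform :=
  match n with
  | O => MAtom (QA 0)
  | S k => MAnd (qconj k) (MAtom (QA (S k)))
  end.

Fixpoint tr (A : hform) : mform :=
  match A with
  | HAtom p => MAtom (PA p)
  | HBot => MBot
  | HTop => MTop
  | HNeg B => MNeg (tr B)
  | HAnd B C => MAnd (tr B) (tr C)
  | HOr B C => MOr (tr B) (tr C)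
  | HImp B C => MImp (tr B) (tr C)
  | HBox n B => MBox (MImp (qconj n) (tr B))
  end.

Definition trset (Gamma : hform -> Prop) : mform -> Prop :=
  fun C => exists B, Gamma B /\ C = tr B.

From Stdlib Require Import List Arith Lia.
Import ListNotations.

(* Read a formula C of L_Box(Q) at a level k ([untr b C k]): q_i becomes top
   for i <= k and bottom otherwise, and Box D becomes [box_at b (untr b D) k],
   the conjunction of Box_l D_l for l < k, together with D_k itself when
   b = true (the reflexive reading, used for S4); here D_l is D read at
   level l.  Reading at any level sends K4(Q)-theorems to K4_h-theorems and,
   reflexively, S4(Q)-theorems to S4_h-theorems: K holds levelwise by K_h, and 4
   holds because the conjunction of the Box_l D_l (l < k) implies Box_m of itself
   for every m >= k, by 4_h and H.  Conversely, q_0 /\ ... /\ q_n reads as true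
   exactly at the levels l >= n, so (Box_n A)^t read at k > n amounts to the
   conjunction of Box_l A_l for n <= l < k, which is equivalent to Box_n A by H
   (and T_h for the reflexive conjunct) as soon as each A_l is equivalent to A.
   Hence A^t read at a level above all box indices of A is provably equivalent
   to A, and reading a derivation of /\Delta^t -> A^t at such a level yields
   /\Delta -> A. *)

Lemma boxes_below_mono n m A : boxes_below n A -> n <= m -> boxes_below m A.
Proof. revert n m; induction A; cbn; intuition eauto; lia. Qed.

Lemma boxes_below_exists A : exists n, boxes_below n A.
Proof.
  induction A as [| | |A IH|A IHA B IHB|A IHA B IHB|A IHA B IHB|i A [m IH]]; cbn.
  1-3: exists 0; exact I.
  1: exact IH.
  1-3: destruct IHA as [n1 H1], IHB as [n2 H2]; exists (n1 + n2);
       split; eapply boxes_below_mono; eauto; lia.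
  exists (S i + m); split; [lia | eapply boxes_below_mono; eauto; lia].
Qed.

Lemma boxes_below_common (D : list hform) A :
  exists k, boxes_below k A /\ forall B, In B D -> boxes_below k B.
Proof.
  induction D as [|B D [k [HA HD]]].
  - destruct (boxes_below_exists A) as [k Hk]; exists k; split; [exact Hk | intros _ []].
  - destruct (boxes_below_exists B) as [m Hm]; exists (k + m); split.
    + eapply boxes_below_mono; [exact HA | lia].
    + intros C [<- | HC]; eapply boxes_below_mono; eauto; lia.
Qed.

Lemma trset_preimage (Gamma : hform -> Prop) (Delta : list mform) :
  (forall C, In C Delta -> trset Gamma C) ->
  exists D, Delta = map tr D /\ forall B, In B D -> Gamma B.
Proof.
  induction Delta as [|C Delta IH]; intros HDelta.
  - exists []; split; [reflexivity | intros _ []].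
  - destruct (HDelta C (or_introl eq_refl)) as [B [HB ->]].
    destruct IH as [D [-> HD]]; [intros; apply HDelta; right; assumption|].
    exists (B :: D); split; [reflexivity | intros B' [<- | HB']; auto].
Qed.

Lemma Lh_wf X A : Lh X A -> wf A.
Proof. induction 1; cbn in *; tauto. Qed.

Fixpoint bigbox (f : nat -> hform) (k : nat) : hform :=
  match k with
  | O => HTop
  | S l => HAnd (bigbox f l) (HBox l (f l))
  end.

Definition box_at (b : bool) (f : nat -> hform) (k : nat) : hform :=
  HAnd (bigbox f k) (if b then f k else HTop).

Fixpoint untr (b : bool) (C : mform) (k : nat) {struct C} : hform :=
  match C with
  | MAtom (PA p) => HAtom p
  | MAtom (QA i) => if i <=? k then HTop else HBot
  | MBot => HBot
  | MTop => HTop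
  | MNeg D => HNeg (untr b D k)
  | MAnd D E => HAnd (untr b D k) (untr b E k)
  | MOr D E => HOr (untr b D k) (untr b E k)
  | MImp D E => HImp (untr b D k) (untr b E k)
  | MBox D => box_at b (untr b D) k
  end.

Lemma heval_untr_qconj v b n l : heval v (untr b (qconj n) l) = (n <=? l).
Proof.
  induction n as [|n IH]; cbn [qconj untr heval].
  - now destruct (0 <=? l).
  - rewrite IH; destruct (Nat.leb_spec n l), (Nat.leb_spec (S n) l); cbn; auto; lia.
Qed.

Lemma meval_untr v b k C :
  meval (fun D => heval v (untr b D k)) C = heval v (untr b C k).
Proof. induction C; cbn; congruence. Qed.

Lemma htaut_untr b k C : mtaut C -> htaut (untr b C k).
Proof. intros H v; rewrite <- meval_untr; apply H. Qed.

Definition leveled (f : nat -> hform) : Prop :=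
  forall l, wf (f l) /\ boxes_below l (f l).

Lemma leveled_wf f l : leveled f -> wf (f l).
Proof. intros Hf; apply Hf. Qed.

Lemma leveled_below f l m : leveled f -> l <= m -> boxes_below m (f l).
Proof. intros Hf Hlm; eapply boxes_below_mono; [apply Hf | exact Hlm]. Qed.

Create HintDb wf.
#[local] Hint Resolve leveled_wf leveled_below boxes_below_mono : wf.
#[local] Hint Extern 1 (_ <= _) => lia : wf.
#[local] Hint Extern 1 (_ < _) => lia : wf.

Ltac wf_auto :=
  cbn [wf boxes_below]; repeat split;
  try match goal with |- context [if ?c then _ else _] => case c; cbn [wf boxes_below] end;
  eauto with wf.

(* A truth-table check in which boxed subformulas are atoms compared
   syntactically; hence the occasional [change] folding a hypothesis into the
   shape the goal has after [simpl]. *)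
Ltac prop_taut :=
  let v := fresh "v" in
  intro v; simpl;
  repeat match goal with |- context [if ?c then _ else _] => case c; simpl end;
  rewrite ?heval_untr_qconj;
  repeat match goal with
  | H : (_ <=? _) = _ |- _ => rewrite H
  | |- context [?m <=? ?n] => destruct (m <=? n)
  | |- context [heval v ?F] => destruct (heval v F)
  | |- context [v ?F] => destruct (v F)
  end; reflexivity.

Lemma bigbox_leveled f : leveled f -> leveled (bigbox f).
Proof. intros Hf k; induction k as [|k [W B]]; wf_auto. Qed.

Lemma box_at_leveled b f : leveled f -> leveled (box_at b f).
Proof.
  intros Hf k; destruct (bigbox_leveled f Hf k); destruct b; wf_auto.
Qed.

Lemma untr_leveled b C : leveled (untr b C).
Proof.
  induction C as [[p|i]| | |C IH|C1 IH1 C2 IH2|C1 IH1 C2 IH2|C1 IH1 C2 IH2|C IH];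
    intro k; cbn [untr wf boxes_below].
  1: tauto.
  1: destruct (i <=? k); cbn; tauto.
  1-2: tauto.
  1: apply IH.
  1-3: destruct (IH1 k), (IH2 k); tauto.
  apply box_at_leveled, IH.
Qed.

#[local] Hint Resolve bigbox_leveled box_at_leveled untr_leveled : wf.

Section Derivations.

Variable X : hform -> Prop.
Hypothesis X_H : forall A, axH A -> X A.
Hypothesis X_K : forall A, axK A -> X A.
Hypothesis X_4 : forall A, ax4 A -> X A.

Lemma taut_mp_list (l : list hform) C :
  Forall (Lh X) l -> wf C -> htaut (fold_right HImp C l) -> Lh X C.
Proof.
  intros Hl WC Ht.
  assert (W : wf (fold_right HImp C l)).
  { clear Ht; induction Hl; cbn; [exact WC | split; [eapply Lh_wf|]; eauto]. }
  pose proof (Lh_taut X _ W Ht) as H; clear W Ht.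
  induction Hl as [|B l HB Hl IH]; cbn in H; [exact H|].
  apply IH, (Lh_mp X B); assumption.
Qed.

Lemma taut_mp1 A C : Lh X A -> wf C -> htaut (HImp A C) -> Lh X C.
Proof. intros; apply (taut_mp_list [A]); auto. Qed.

Lemma taut_mp2 A B C :
  Lh X A -> Lh X B -> wf C -> htaut (HImp A (HImp B C)) -> Lh X C.
Proof. intros; apply (taut_mp_list [A; B]); auto. Qed.

Lemma taut_mp3 A B D C :
  Lh X A -> Lh X B -> Lh X D -> wf C ->
  htaut (HImp A (HImp B (HImp D C))) -> Lh X C.
Proof. intros; apply (taut_mp_list [A; B; D]); auto. Qed.

Lemma taut_mp4 A B D E C :
  Lh X A -> Lh X B -> Lh X D -> Lh X E -> wf C ->
  htaut (HImp A (HImp B (HImp D (HImp E C)))) -> Lh X C.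
Proof. intros; apply (taut_mp_list [A; B; D; E]); auto. Qed.

Lemma Lh_H n A : wf A -> boxes_below n A -> Lh X (HImp (HBox n A) (HBox (S n) A)).
Proof. intros; apply Lh_ax; [wf_auto | apply X_H; constructor]. Qed.

Lemma Lh_K n A B : wf A -> wf B -> boxes_below n A -> boxes_below n B ->
  Lh X (HImp (HBox n (HImp A B)) (HImp (HBox n A) (HBox n B))).
Proof. intros; apply Lh_ax; [wf_auto | apply X_K; constructor]. Qed.

Lemma Lh_4 n A : wf A -> boxes_below n A -> Lh X (HImp (HBox n A) (HBox (S n) (HBox n A))).
Proof. intros; apply Lh_ax; [wf_auto | apply X_4; constructor]. Qed.

Lemma Lh_box_top n : Lh X (HBox n HTop).
Proof. apply Lh_nec; [apply Lh_taut; [exact I | prop_taut] | exact I]. Qed.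

Lemma box_mono n A B : Lh X (HImp A B) -> boxes_below n A -> boxes_below n B ->
  Lh X (HImp (HBox n A) (HBox n B)).
Proof.
  intros H BA BB; destruct (Lh_wf _ _ H) as [WA WB].
  apply (Lh_mp X (HBox n (HImp A B))); [apply Lh_nec; wf_auto | apply Lh_K; assumption].
Qed.

Lemma box_and n A B : wf A -> wf B -> boxes_below n A -> boxes_below n B ->
  Lh X (HImp (HBox n A) (HImp (HBox n B) (HBox n (HAnd A B)))).
Proof.
  intros WA WB BA BB.
  assert (pair : Lh X (HImp A (HImp B (HAnd A B)))) by (apply Lh_taut; [wf_auto | prop_taut]).
  pose proof (box_mono n _ _ pair BA ltac:(wf_auto)) as h1.
  pose proof (Lh_K n B (HAnd A B) WB ltac:(wf_auto) BB ltac:(wf_auto)) as h2.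
  apply (taut_mp2 _ _ _ h1 h2); [wf_auto | prop_taut].
Qed.

Lemma box_lift n m A : n <= m -> wf A -> boxes_below n A ->
  Lh X (HImp (HBox n A) (HBox m A)).
Proof.
  intros Hnm WA BA; induction Hnm as [|m Hnm IH].
  - apply Lh_taut; [wf_auto | prop_taut].
  - apply (taut_mp2 _ _ _ IH (Lh_H m A WA ltac:(wf_auto))); [wf_auto | prop_taut].
Qed.

Lemma bigbox_box f k m : leveled f -> k <= m ->
  Lh X (HImp (bigbox f k) (HBox m (bigbox f k))).
Proof.
  intros Hf; induction k as [|k IH]; intros Hkm; cbn [bigbox].
  - apply (taut_mp1 _ _ (Lh_box_top m)); [wf_auto | prop_taut].
  - pose proof (IH ltac:(lia)) as h1.
    pose proof (Lh_4 k (f k) ltac:(wf_auto) ltac:(wf_auto)) as h2.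
    pose proof (box_lift (S k) m (HBox k (f k)) Hkm ltac:(wf_auto) ltac:(wf_auto)) as h3.
    pose proof (box_and m (bigbox f k) (HBox k (f k))
                  ltac:(wf_auto) ltac:(wf_auto) ltac:(wf_auto) ltac:(wf_auto)) as h4.
    apply (taut_mp4 _ _ _ _ _ h1 h2 h3 h4); [wf_auto | prop_taut].
Qed.

Lemma bigbox_elim f k j : leveled f -> j < k ->
  Lh X (HImp (bigbox f k) (HBox j (f j))).
Proof.
  intros Hf; induction k as [|k IH]; intros Hjk; [lia|]; cbn [bigbox].
  destruct (Nat.eq_dec j k) as [-> | Hne].
  - apply Lh_taut; [wf_auto | prop_taut].
  - apply (taut_mp1 _ _ (IH ltac:(lia))); [wf_auto | prop_taut].
Qed.

Lemma bigbox_intro f H k : leveled f -> wf H ->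
  (forall j, j < k -> Lh X (HImp H (HBox j (f j)))) -> Lh X (HImp H (bigbox f k)).
Proof.
  intros Hf WH; induction k as [|k IH]; intros Hj; cbn [bigbox].
  - apply Lh_taut; [wf_auto | prop_taut].
  - pose proof (IH (fun j Hjk => Hj j ltac:(lia))) as h1.
    apply (taut_mp2 _ _ _ h1 (Hj k ltac:(lia))); [wf_auto | prop_taut].
Qed.

Lemma bigbox_nec f k : leveled f -> (forall l, Lh X (f l)) -> Lh X (bigbox f k).
Proof.
  intros Hf Hp; induction k as [|k IH]; cbn [bigbox].
  - apply Lh_taut; [wf_auto | prop_taut].
  - pose proof (Lh_nec X k (f k) (Hp k) ltac:(wf_auto)) as h.
    apply (taut_mp2 _ _ _ IH h); [wf_auto | prop_taut].
Qed.

Lemma bigbox_K f g k : leveled f -> leveled g ->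
  Lh X (HImp (bigbox (fun l => HImp (f l) (g l)) k) (HImp (bigbox f k) (bigbox g k))).
Proof.
  intros Hf Hg.
  assert (Hfg : leveled (fun l => HImp (f l) (g l))) by (intro l; wf_auto).
  induction k as [|k IH]; cbn [bigbox].
  - apply Lh_taut; [wf_auto | prop_taut].
  - pose proof (Lh_K k (f k) (g k)
                  ltac:(wf_auto) ltac:(wf_auto) ltac:(wf_auto) ltac:(wf_auto)) as h.
    apply (taut_mp2 _ _ _ IH h); [wf_auto | prop_taut].
Qed.

Variable b : bool.

Lemma bigbox_4 f k : leveled f ->
  Lh X (HImp (bigbox f k) (bigbox (box_at b f) k)).
Proof.
  intros Hf; induction k as [|k IH]; cbn [bigbox].
  - apply Lh_taut; [wf_auto | prop_taut].
  - pose proof (bigbox_box f k k Hf (le_n k)) as h1.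
    assert (h2 : Lh X (HImp (HBox k (f k)) (HBox k (if b then f k else HTop)))).
    { case b.
      - apply Lh_taut; [wf_auto | prop_taut].
      - apply (taut_mp1 _ _ (Lh_box_top k)); [wf_auto | prop_taut]. }
    pose proof (box_and k (bigbox f k) (if b then f k else HTop)
                  ltac:(wf_auto) ltac:(wf_auto) ltac:(wf_auto) ltac:(wf_auto)) as h3.
    change (HAnd (bigbox f k) (if b then f k else HTop)) with (box_at b f k) in h3.
    apply (taut_mp4 _ _ _ _ _ IH h1 h2 h3); [wf_auto | prop_taut].
Qed.

Lemma untr_sound (Y : mform -> Prop) :
  (forall C, Y C -> forall k, Lh X (untr b C k)) ->
  forall C, Lm Y C -> forall k, Lh X (untr b C k).
Proof.
  intros HY C H; induction H as [C Ht|C HC|C D _ IH1 _ IH2|C _ IH]; intro k.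
  - apply Lh_taut; [apply untr_leveled | apply htaut_untr, Ht].
  - apply HY, HC.
  - exact (Lh_mp X _ _ (IH1 k) (IH2 k)).
  - pose proof (bigbox_nec _ k (untr_leveled b C) IH) as h.
    apply (taut_mp2 _ _ _ h (IH k)); [wf_auto | prop_taut].
Qed.

Lemma untr_axK C D k : Lh X (untr b (MImp (MBox (MImp C D)) (MImp (MBox C) (MBox D))) k).
Proof.
  pose proof (bigbox_K (untr b C) (untr b D) k (untr_leveled b C) (untr_leveled b D)) as h.
  apply (taut_mp1 _ _ h); [wf_auto | prop_taut].
Qed.

Lemma untr_ax4 C k : Lh X (untr b (MImp (MBox C) (MBox (MBox C))) k).
Proof.
  pose proof (bigbox_4 (untr b C) k (untr_leveled b C)) as h.
  apply (taut_mp1 _ _ h); [wf_auto | prop_taut].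
Qed.

Lemma untr_axT C k : b = true -> Lh X (untr b (MImp (MBox C) C) k).
Proof. intros Hb; rewrite Hb; apply Lh_taut; [wf_auto | prop_taut]. Qed.

Lemma untr_sound_K4 C : K4Q C -> forall k, Lh X (untr b C k).
Proof.
  apply untr_sound; intros D [HD | HD] k; destruct HD; [apply untr_axK | apply untr_ax4].
Qed.

Lemma untr_sound_S4 C : b = true -> S4Q C -> forall k, Lh X (untr b C k).
Proof.
  intros Hb; apply untr_sound; intros D [HD | [HD | HD]] k; destruct HD;
    [apply untr_axK | apply untr_ax4 | apply untr_axT, Hb].
Qed.

Hypothesis X_T : b = true -> forall A, axT A -> X A.

Lemma Lh_T n A : b = true -> wf A -> boxes_below n A -> Lh X (HImp (HBox n A) A).
Proof. intros Hb WA BA; apply Lh_ax; [wf_auto | apply X_T; [exact Hb | constructor]]. Qed.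

Lemma untr_tr_box_elim n A k : wf A -> boxes_below n A -> n < k ->
  Lh X (HImp (untr b (tr A) n) A) ->
  Lh X (HImp (untr b (tr (HBox n A)) k) (HBox n A)).
Proof.
  intros WA BA Hnk IH.
  set (g := untr b (MImp (qconj n) (tr A))).
  change (untr b (tr (HBox n A)) k) with (box_at b g k).
  pose proof (bigbox_elim g k n (untr_leveled b _) Hnk) as h1.
  assert (h2 : Lh X (HImp (g n) A)).
  { assert (E : (n <=? n) = true) by apply Nat.leb_refl.
    apply (taut_mp1 _ _ IH); [wf_auto | subst g; prop_taut]. }
  pose proof (box_mono n _ _ h2 ltac:(wf_auto) BA) as h3.
  apply (taut_mp2 _ _ _ h1 h3); [wf_auto | prop_taut].
Qed.

Lemma box_untr_tr_guarded n A j : wf A -> boxes_below n A ->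
  (forall l, n <= l -> Lh X (HImp A (untr b (tr A) l))) ->
  Lh X (HImp (HBox n A) (HBox j (untr b (MImp (qconj n) (tr A)) j))).
Proof.
  intros WA BA IH.
  destruct (Nat.lt_ge_cases j n) as [Hjn | Hnj].
  - assert (E : (n <=? j) = false) by (apply Nat.leb_gt; exact Hjn).
    assert (h : Lh X (untr b (MImp (qconj n) (tr A)) j))
      by (apply Lh_taut; [wf_auto | prop_taut]).
    apply (taut_mp1 _ _ (Lh_nec X j _ h ltac:(wf_auto))); [wf_auto | prop_taut].
  - pose proof (box_lift n j A Hnj WA BA) as h1.
    assert (h2 : Lh X (HImp A (untr b (MImp (qconj n) (tr A)) j)))
      by (apply (taut_mp1 _ _ (IH j Hnj)); [wf_auto | prop_taut]).
    pose proof (box_mono j _ _ h2 ltac:(wf_auto) ltac:(wf_auto)) as h3.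
    apply (taut_mp2 _ _ _ h1 h3); [wf_auto | prop_taut].
Qed.

Lemma untr_tr_box_intro n A k : wf A -> boxes_below n A -> n <= k ->
  (forall l, n <= l -> Lh X (HImp A (untr b (tr A) l))) ->
  Lh X (HImp (HBox n A) (untr b (tr (HBox n A)) k)).
Proof.
  intros WA BA Hnk IH.
  pose proof (bigbox_intro _ (HBox n A) k (untr_leveled b _) ltac:(wf_auto)
                (fun j _ => box_untr_tr_guarded n A j WA BA IH)) as h1.
  assert (h2 : Lh X (HImp (HBox n A) (if b then untr b (MImp (qconj n) (tr A)) k else HTop))).
  { pose proof (fun Hb => Lh_T n A Hb WA BA) as hT.
    destruct b.
    - apply (taut_mp2 _ _ _ (hT eq_refl) (IH k Hnk)); [wf_auto | prop_taut].
    - apply Lh_taut; [wf_auto | prop_taut]. }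
  apply (taut_mp2 _ _ _ h1 h2); [wf_auto | prop_taut].
Qed.

Lemma untr_tr_equiv A : wf A -> forall k, boxes_below k A ->
  Lh X (HImp (untr b (tr A) k) A) /\ Lh X (HImp A (untr b (tr A) k)).
Proof.
  induction A as [| | |A IH|A IHA B IHB|A IHA B IHB|A IHA B IHB|n A IH];
    intros WA k BA.
  1-3: split; apply Lh_taut; [wf_auto | prop_taut | wf_auto | prop_taut].
  1: destruct (IH WA k BA) as [h1 h2];
     split; [apply (taut_mp1 _ _ h2) | apply (taut_mp1 _ _ h1)]; wf_auto || prop_taut.
  1-3: destruct WA as [WA WB], BA as [BA BB];
       destruct (IHA WA k BA) as [h1 h2], (IHB WB k BB) as [h3 h4];
       split; apply (taut_mp4 _ _ _ _ _ h1 h2 h3 h4); wf_auto || prop_taut.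
  destruct WA as [WA BnA], BA as [Hnk BkA]; split.
  - apply untr_tr_box_elim; [assumption .. | apply (IH WA n BnA)].
  - apply untr_tr_box_intro; [assumption | assumption | lia |].
    intros l Hnl; apply (IH WA l ltac:(wf_auto)).
Qed.

Lemma hbigand_untr D k : (forall B, In B D -> wf B /\ boxes_below k B) ->
  Lh X (HImp (hbigand D) (untr b (mbigand (map tr D)) k)).
Proof.
  induction D as [|B D IH]; intros HD; cbn [hbigand mbigand map untr].
  - apply Lh_taut; [wf_auto | prop_taut].
  - destruct (HD B (or_introl eq_refl)) as [WB BB].
    pose proof (proj2 (untr_tr_equiv B WB k BB)) as h1.
    pose proof (IH (fun C HC => HD C (or_intror HC))) as h2.
    apply (taut_mp2 _ _ _ h1 h2); [|prop_taut].
    destruct (Lh_wf _ _ h2); wf_auto.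
Qed.

Lemma hderives_of_mderives (L : mform -> Prop) Gamma A :
  (forall C, L C -> forall k, Lh X (untr b C k)) ->
  (forall B, Gamma B -> wf B) -> wf A ->
  mderives L (trset Gamma) (tr A) -> hderives (Lh X) Gamma A.
Proof.
  intros HL WG WA [Delta [HDelta Hder]].
  destruct (trset_preimage Gamma Delta HDelta) as [D [-> HD]].
  destruct (boxes_below_common D A) as [k [BA BD]].
  exists D; split; [exact HD|].
  pose proof (hbigand_untr D k (fun B HB => conj (WG B (HD B HB)) (BD B HB))) as h1.
  pose proof (HL _ Hder k) as h2.
  pose proof (proj1 (untr_tr_equiv A WA k BA)) as h3.
  apply (taut_mp3 _ _ _ _ h1 h2 h3); [|prop_taut].
  destruct (Lh_wf _ _ h1); wf_auto.
Qed.

End Derivations.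

Theorem theorem3p11 (Gamma : hform -> Prop) (A : hform) :
  (forall B, Gamma B -> wf B) -> wf A ->
  (mderives K4Q (trset Gamma) (tr A) -> hderives K4h Gamma A) /\
  (mderives S4Q (trset Gamma) (tr A) -> hderives S4h Gamma A).
Proof.
  intros WG WA; split; intros Hder.
  - refine (hderives_of_mderives K4h_axioms _ _ false _ K4Q Gamma A
              (untr_sound_K4 _ _ _ _ _) WG WA Hder);
      unfold K4h_axioms; intros; first [tauto | discriminate].
  - refine (hderives_of_mderives S4h_axioms _ _ true _ S4Q Gamma A
              (fun C => untr_sound_S4 _ _ _ _ _ C eq_refl) WG WA Hder);
      unfold S4h_axioms; tauto.
Qed.
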